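(* Let $X$ be a Hausdorff Baire developable space which is collectionwise Hausdorff, or which is meta-Lindelöf. Then $dis(X)\geq\Delta(X)$.
   Context: All spaces are Hausdorff. $dis(X)$ denotes the least cardinal $\tau$ such that $X$ is the union of $\tau$ discrete subspaces. $\Delta(X)$ is the least cardinality of a non-empty open subset of $X$. A sequence $\{\mathcal{G}_n:n\in\omega\}$ of open covers of $X$ is a development if for every $x$ the sets $\bigcup\{G\in\mathcal{G}_n: x\in G\}$, $n\in\omega$, form a local base at $x$; $X$ is developable if it admits a development. *)

From Stdlib Require Import Classical.

Record topology (X : Type) : Type := Topology {
  open : (X -> Prop) -> Prop;
  open_full : open (fun _ => True);
  open_inter : forall U V, open U -> open V -> open (fun x => U x /\ V x);
  open_union : forall F : (X -> Prop) -> Prop,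
      (forall U, F U -> open U) -> open (fun x => exists U, F U /\ U x)
}.
Arguments open {X} t U.

Section Topo.
Context {X : Type} (T : topology X).

Definition closed (A : X -> Prop) : Prop := open T (fun x => ~ A x).

Definition hausdorff : Prop :=
  forall x y : X, x <> y -> exists U V, open T U /\ open T V /\ U x /\ V y /\
    (forall z, U z -> V z -> False).

Definition discrete_subspace (A : X -> Prop) : Prop :=
  forall x, A x -> exists U, open T U /\ U x /\ (forall y, A y -> U y -> y = x).

Definition dense (A : X -> Prop) : Prop :=
  forall U, open T U -> (exists x, U x) -> exists x, U x /\ A x.

Definition baire : Prop :=
  forall G : nat -> X -> Prop, (forall n, open T (G n)) -> (forall n, dense (G n)) ->
    dense (fun x => forall n, G n x).

Definition open_cover (F : (X -> Prop) -> Prop) : Prop :=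
  (forall U, F U -> open T U) /\ (forall x, exists U, F U /\ U x).

Definition star (x : X) (F : (X -> Prop) -> Prop) : X -> Prop :=
  fun y => exists U, F U /\ U x /\ U y.

Definition development (G : nat -> (X -> Prop) -> Prop) : Prop :=
  (forall n, open_cover (G n)) /\
  (forall x U, open T U -> U x -> exists n, forall y, star x (G n) y -> U y).

Definition developable : Prop := exists G, development G.

Definition collectionwise_hausdorff : Prop :=
  forall D : X -> Prop, closed D -> discrete_subspace D ->
    exists W : X -> X -> Prop,
      (forall d, D d -> open T (W d) /\ W d d) /\
      (forall d e z, D d -> D e -> d <> e -> W d z -> W e z -> False).

Definition countable (A : Type) : Prop := exists f : A -> nat, forall a b, f a = f b -> a = b.

Definition refines (V F : (X -> Prop) -> Prop) : Prop :=
  forall W, V W -> exists U, F U /\ (forall x, W x -> U x).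

Definition point_countable (V : (X -> Prop) -> Prop) : Prop :=
  forall x, countable {W : X -> Prop | V W /\ W x}.

Definition meta_lindelof : Prop :=
  forall F, open_cover F -> exists V, open_cover V /\ refines V F /\ point_countable V.

Definition card_le (A : X -> Prop) (I : Type) : Prop :=
  exists f : {x | A x} -> I, forall a b, f a = f b -> a = b.

(* dis(X) >= Delta(X): for every cover of X by discrete subspaces indexed by I
   (so |I| ranges over the cardinals whose minimum is dis(X)), some non-empty
   open set has cardinality <= |I| (i.e. Delta(X) <= |I|). *)
Definition dis_ge_Delta : Prop :=
  forall (I : Type) (D : I -> X -> Prop),
    (forall i, discrete_subspace (D i)) -> (forall x, exists i, D i x) ->
    exists U, open T U /\ (exists x, U x) /\ card_le U I.

End Topo.

(* For x in D i some n-th star of x meets D i only in x; these points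
   form closed discrete sets isolated_part i n.  By the Baire property some level (the
   union over i of the isolated_part i n) is dense in a non-empty open set B lying inside a
   single member W of G n; as W meets each isolated_part i n at most once, the points of
   the level in B are indexed injectively by I.  Collectionwise Hausdorffness, resp.
   meta-Lindelofness, gives every closed discrete set an open expansion in which each
   point lies in at most one, resp. countably many, of the neighbourhoods.  Choosing in
   the neighbourhood of x in B a point s of the dense level, x is determined by its part
   (i, m), the index of s and the code of x at s: so |B| <= |I x nat x I x nat|.  If I is
   countable, B is a non-empty countable open set in a Hausdorff Baire space and has an
   isolated point p, so {p} is open of size <= |I|; otherwise |I x I| = |I| (Hessenberg). *)

From Stdlib Require Import Classical ClassicalEpsilon ProofIrrelevance Cantor
  FunctionalExtensionality PropExtensionality.
From mathcomp Require boolp classical_sets.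
Set Bullet Behavior "Strict Subproofs".

Definition injective {A B : Type} (f : A -> B) : Prop := forall a b, f a = f b -> a = b.

Definition card_leq (A B : Type) : Prop := exists f : A -> B, injective f.

Lemma card_leq_trans (A B C : Type) : card_leq A B -> card_leq B C -> card_leq A C.
Proof.
  intros [f hf] [g hg]. exists (fun a => g (f a)). intros a b e. auto.
Qed.

Lemma card_leq_prod (A B C : Type) :
  card_leq A C -> card_leq B C -> card_leq (C * C) C -> card_leq (A * B) C.
Proof.
  intros [f hf] [g hg] [m hm]. exists (fun p => m (f (fst p), g (snd p))).
  intros [a b] [a' b'] e. apply hm in e. injection e as e1 e2.
  apply hf in e1. apply hg in e2. subst. reflexivity.
Qed.

Lemma to_nat_injective : injective to_nat.
Proof.
  intros p q e. rewrite <- (cancel_of_to p), <- (cancel_of_to q), e. reflexivity.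
Qed.

Lemma nat_pairing : card_leq (nat * nat) nat.
Proof. exists to_nat. exact to_nat_injective. Qed.

Lemma zorn_preorder (P : Type) (le : P -> P -> Prop) (p0 : P) :
  (forall x, le x x) -> (forall x y z, le x y -> le y z -> le x z) ->
  (forall C : P -> Prop, (forall a b, C a -> C b -> le a b \/ le b a) ->
     exists u, forall c, C c -> le c u) ->
  exists m, forall x, le m x -> le x m.
Proof.
  intros hrefl htrans hub.
  destruct (classical_sets.ZL_preorder p0 (R := fun a b => boolp.asbool (le a b))) as [m hm].
  - intro t. apply boolp.asboolT. auto.
  - intros r s t h1 h2. apply boolp.asboolT. apply boolp.asboolW in h1, h2. eauto.
  - intros C hC. destruct (hub C) as [u hu].
    + intros a b ha hb. destruct (hC a b ha hb) as [h|h]; apply boolp.asboolW in h; auto.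
    + exists u. intros s hs. apply boolp.asboolT. auto.
  - exists m. intros x hx. apply boolp.asboolW, hm, boolp.asboolT, hx.
Qed.

Definition partial_injection {A B : Type} (R : A -> B -> Prop) : Prop :=
  (forall a b b', R a b -> R a b' -> b = b') /\ (forall a a' b, R a b -> R a' b -> a = a').

(* A maximal partial injection is defined everywhere or onto: otherwise it could be
   extended by one more pair. *)
Lemma maximal_partial_injection (A B : Type) (R : A -> B -> Prop) :
  partial_injection R ->
  (forall R', partial_injection R' -> (forall a b, R a b -> R' a b) -> forall a b, R' a b -> R a b) ->
  (forall a, exists b, R a b) \/ (forall b, exists a, R a b).
Proof.
  intros [hfun hinj] hmax.
  apply NNPP; intro hno. apply not_or_and in hno. destruct hno as [ha hb].
  apply not_all_ex_not in ha. destruct ha as [a0 ha0].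
  apply not_all_ex_not in hb. destruct hb as [b0 hb0].
  set (R' := fun a b => R a b \/ (a = a0 /\ b = b0)).
  assert (hR' : partial_injection R').
  { split.
    - intros a b b' [h1|[-> ->]] [h2|[e1 e2]]; subst; eauto;
        exfalso; apply ha0; eauto.
    - intros a a' b [h1|[-> ->]] [h2|[e1 e2]]; subst; eauto;
        exfalso; apply hb0; eauto. }
  apply ha0. exists b0. apply (hmax R' hR'); [intros a b h; left; exact h | right; auto].
Qed.

Theorem card_comparable (A B : Type) : card_leq A B \/ card_leq B A.
Proof.
  set (P := {R : A -> B -> Prop | partial_injection R}).
  set (le := fun p q : P => forall a b, proj1_sig p a b -> proj1_sig q a b).
  assert (hempty : partial_injection (fun (_ : A) (_ : B) => False)).
  { split; intros; contradiction. }
  destruct (zorn_preorder P le (exist _ _ hempty)) as [[R hR] hmax].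
  - intros p a b h; exact h.
  - intros p q s h1 h2 a b h; auto.
  - intros C hC.
    set (U := fun a b => exists p, C p /\ proj1_sig p a b).
    assert (hU : partial_injection U).
    { split.
      - intros a b b' [p [hp h1]] [q [hq h2]].
        destruct (hC p q hp hq) as [h|h].
        + exact (proj1 (proj2_sig q) a b b' (h a b h1) h2).
        + exact (proj1 (proj2_sig p) a b b' h1 (h a b' h2)).
      - intros a a' b [p [hp h1]] [q [hq h2]].
        destruct (hC p q hp hq) as [h|h].
        + exact (proj2 (proj2_sig q) a a' b (h a b h1) h2).
        + exact (proj2 (proj2_sig p) a a' b h1 (h a' b h2)). }
    exists (exist _ U hU). intros p hp a b h. exists p; auto.
  - destruct (maximal_partial_injection A B R hR) as [htot|hsurj].
    + intros R' hR' hsub. exact (hmax (exist _ R' hR') hsub).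
    + left. destruct (choice R htot) as [f hf]. exists f.
      intros a a' e. apply (proj2 hR a a' (f a)); [|rewrite e]; auto.
    + right. destruct (choice (fun b a => R a b) hsurj) as [f hf]. exists f.
      intros b b' e. apply (proj1 hR (f b) b b'); [|rewrite e]; auto.
Qed.

Lemma subtype_injection (A : Type) (P Q : A -> Prop) :
  card_leq {a | P a} {a | Q a} ->
  exists h : A -> A, (forall u, P u -> Q (h u)) /\
    (forall u v, P u -> P v -> h u = h v -> u = v).
Proof.
  intros [f hf].
  exists (fun u => match excluded_middle_informative (P u) with
                   | left hu => proj1_sig (f (exist _ u hu)) | right _ => u end).
  split.
  - intros u hu. destruct (excluded_middle_informative (P u)) as [h|h]; [|contradiction].
    exact (proj2_sig (f (exist _ u h))).
  - intros u v hu hv e.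
    destruct (excluded_middle_informative (P u)) as [h1|h1]; [|contradiction].
    destruct (excluded_middle_informative (P v)) as [h2|h2]; [|contradiction].
    apply eq_sig_hprop in e; [|intros; apply proof_irrelevance].
    apply hf in e. exact (f_equal (@proj1_sig _ _) e).
Qed.

Section Hessenberg.
Variables (A : Type) (e : nat -> A).
Hypothesis e_inj : injective e.

Record pairing (S : A -> Prop) (R : A * A -> A -> Prop) : Prop := {
  pairing_support : forall x y c, R (x, y) c -> S x /\ S y /\ S c;
  pairing_total : forall x y, S x -> S y -> exists c, R (x, y) c;
  pairing_functional : forall p c c', R p c -> R p c' -> c = c';
  pairing_injective : forall p p' c, R p c -> R p' c -> p = p';
  pairing_base : forall n, S (e n) }.

Lemma pairing_nat : pairing (fun a => exists n, a = e n)
  (fun p c => exists n m, p = (e n, e m) /\ c = e (to_nat (n, m))).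
Proof.
  split.
  - intros x y c [n [m [hp hc]]]. injection hp as hx hy. subst. repeat split; eauto.
  - intros x y [n hx] [m hy]. subst. eauto.
  - intros p c c' [n [m [-> ->]]] [n' [m' [hp ->]]].
    injection hp as hn hm. apply e_inj in hn, hm. subst. reflexivity.
  - intros p p' c [n [m [-> ->]]] [n' [m' [-> hc]]].
    apply e_inj, to_nat_injective in hc. injection hc as -> ->. reflexivity.
  - eauto.
Qed.

Definition pairing_data := {p : (A -> Prop) * (A * A -> A -> Prop) | pairing (fst p) (snd p)}.

Definition pairing_le (p q : pairing_data) : Prop :=
  (forall a, fst (proj1_sig p) a -> fst (proj1_sig q) a) /\
  (forall z c, snd (proj1_sig p) z c -> snd (proj1_sig q) z c).

Lemma pairing_chain_union (C : pairing_data -> Prop) (q0 : pairing_data) :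
  C q0 -> (forall p q, C p -> C q -> pairing_le p q \/ pairing_le q p) ->
  pairing (fun a => exists q, C q /\ fst (proj1_sig q) a)
          (fun z c => exists q, C q /\ snd (proj1_sig q) z c).
Proof.
  intros hq0 hC. split.
  - intros x y c [q [hq h]]. destruct (pairing_support _ _ (proj2_sig q) x y c h) as [h1 [h2 h3]].
    repeat split; exists q; auto.
  - intros x y [q1 [hq1 h1]] [q2 [hq2 h2]].
    destruct (hC q1 q2 hq1 hq2) as [[l1 _]|[l1 _]].
    + destruct (pairing_total _ _ (proj2_sig q2) x y (l1 x h1) h2) as [c hc]. exists c, q2; auto.
    + destruct (pairing_total _ _ (proj2_sig q1) x y h1 (l1 y h2)) as [c hc]. exists c, q1; auto.
  - intros p c c' [q1 [hq1 h1]] [q2 [hq2 h2]].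
    destruct (hC q1 q2 hq1 hq2) as [[_ l2]|[_ l2]].
    + exact (pairing_functional _ _ (proj2_sig q2) p c c' (l2 _ _ h1) h2).
    + exact (pairing_functional _ _ (proj2_sig q1) p c c' h1 (l2 _ _ h2)).
  - intros p p' c [q1 [hq1 h1]] [q2 [hq2 h2]].
    destruct (hC q1 q2 hq1 hq2) as [[_ l2]|[_ l2]].
    + exact (pairing_injective _ _ (proj2_sig q2) p p' c (l2 _ _ h1) h2).
    + exact (pairing_injective _ _ (proj2_sig q1) p p' c h1 (l2 _ _ h2)).
  - intro n. exists q0. split; auto. apply (pairing_base _ _ (proj2_sig q0)).
Qed.

Lemma maximal_pairing : exists m : pairing_data, forall q, pairing_le m q -> pairing_le q m.
Proof.
  apply (zorn_preorder _ _ (exist (fun p => pairing (fst p) (snd p)) (_, _) pairing_nat)).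
  - intro p; split; auto.
  - intros p q s [h1 h2] [h3 h4]; split; auto.
  - intros C hC. destruct (classic (exists q, C q)) as [[q0 hq0]|hne].
    + exists (exist (fun p => pairing (fst p) (snd p)) (_, _) (pairing_chain_union C q0 hq0 hC)).
      intros q hq. split; intros; exists q; auto.
    + exists (exist (fun p => pairing (fst p) (snd p)) (_, _) pairing_nat).
      intros q hq. exfalso; eauto.
Qed.

Section PairingFunction.
Variables (S : A -> Prop) (R : A * A -> A -> Prop) (r : A -> A -> A).
Hypothesis hSR : pairing S R.
Hypothesis r_graph : forall x y, S x -> S y -> R (x, y) (r x y).

Lemma r_closed x y : S x -> S y -> S (r x y).
Proof. intros hx hy. apply (pairing_support _ _ hSR x y), r_graph; auto. Qed.

Lemma r_injective x y x' y' : S x -> S y -> S x' -> S y' -> r x y = r x' y' -> x = x' /\ y = y'.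
Proof.
  intros hx hy hx' hy' hr. assert (h := r_graph x y hx hy). rewrite hr in h.
  assert (hp := pairing_injective _ _ hSR _ _ _ h (r_graph x' y' hx' hy')).
  injection hp; auto.
Qed.

(* If the complement of S is no larger than S, then A is no larger than S,
   so that A x A injects into S x S and hence into A. *)
Lemma pairing_absorbs : card_leq {a | ~ S a} {a | S a} -> card_leq (A * A) A.
Proof.
  intro hc. destruct (subtype_injection A _ _ hc) as [k [hk_maps hk_inj]].
  assert (s0 := pairing_base _ _ hSR 0). assert (s1 := pairing_base _ _ hSR 1).
  set (phi := fun a => match excluded_middle_informative (S a) with
                       | left _ => r a (e 0) | right _ => r (k a) (e 1) end).
  assert (phi_S : forall a, S (phi a)).
  { intro a. unfold phi. destruct (excluded_middle_informative (S a)); apply r_closed; auto. }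
  assert (phi_inj : injective phi).
  { intros a b. unfold phi.
    destruct (excluded_middle_informative (S a)) as [ha|ha];
    destruct (excluded_middle_informative (S b)) as [hb|hb]; intro h;
      apply r_injective in h; auto; destruct h as [h1 h2].
    - exact h1.
    - apply e_inj in h2. discriminate.
    - apply e_inj in h2. discriminate.
    - apply hk_inj; auto. }
  exists (fun p => r (phi (fst p)) (phi (snd p))).
  intros [a b] [a' b'] h. apply r_injective in h; auto.
  destruct h as [h1 h2]. apply phi_inj in h1, h2. simpl in h1, h2. subst. reflexivity.
Qed.

(* If S is no larger than its complement, the pairing extends strictly: with h an
   injection of S into its complement, the pairs of S' = S + h(S) outside S x S form
   three copies of S x S, which are coded injectively into h(S). *)
Section Extension.
Variable h : A -> A.
Hypothesis h_out : forall u, S u -> ~ S (h u).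
Hypothesis h_inj : forall u v, S u -> S v -> h u = h v -> u = v.

Definition split_point (x : A) (b : nat) (u : A) : Prop :=
  S u /\ ((b = 0 /\ x = u) \/ (b = 1 /\ x = h u)).

Lemma split_point_in_S x b u : split_point x b u -> S x -> b = 0.
Proof. intros [hu [[hb _]|[_ ->]]] hx; [exact hb | contradiction (h_out u hu hx)]. Qed.

Lemma split_point_unique x b u b' u' :
  split_point x b u -> split_point x b' u' -> b = b' /\ u = u'.
Proof.
  intros [hu [[-> ->]|[-> ->]]] [hu' [[-> hx]|[-> hx]]].
  - auto.
  - subst. contradiction (h_out u' hu').
  - subst. contradiction (h_out u hu).
  - auto.
Qed.

Lemma split_point_determines x x' b u : split_point x b u -> split_point x' b u -> x = x'.
Proof.
  intros [_ [[hb hx]|[hb hx]]] [_ [[hb' hx']|[hb' hx']]]; congruence.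
Qed.

Definition extended_support (x : A) : Prop := exists b u, split_point x b u.

Definition new_code (p : A * A) (c : A) : Prop :=
  exists bx by_ u v, split_point (fst p) bx u /\ split_point (snd p) by_ v /\
    (bx = 1 \/ by_ = 1) /\ c = h (r (r (e bx) (e by_)) (r u v)).

Definition extended_graph (p : A * A) (c : A) : Prop := R p c \/ new_code p c.

Lemma code_in_S b b' u v : S u -> S v -> S (r (r (e b) (e b')) (r u v)).
Proof.
  intros hu hv. assert (base := pairing_base _ _ hSR). repeat apply r_closed; auto.
Qed.

Lemma new_code_not_in_S p c : new_code p c -> ~ S c.
Proof.
  intros [bx [by_ [u [v [[hu _] [[hv _] [_ ->]]]]]]]. apply h_out, code_in_S; auto.
Qed.

Lemma R_new_code_disjoint x y c c' : R (x, y) c -> new_code (x, y) c' -> False.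
Proof.
  intros hR [bx [by_ [u [v [hx [hy [hb _]]]]]]].
  destruct (pairing_support _ _ hSR x y c hR) as [hSx [hSy _]].
  apply split_point_in_S in hx, hy; auto. destruct hb; congruence.
Qed.

Lemma extension_pairing : pairing extended_support extended_graph.
Proof.
  assert (base := pairing_base _ _ hSR).
  assert (in_S : forall x, S x -> extended_support x).
  { intros x hx. exists 0, x. split; auto. }
  split.
  - intros x y c [hR|hnew].
    + destruct (pairing_support _ _ hSR x y c hR) as [h1 [h2 h3]]. auto.
    + destruct hnew as [bx [by_ [u [v [hx [hy [_ ->]]]]]]].
      simpl in hx, hy. split; [exists bx, u; exact hx|split; [exists by_, v; exact hy|]].
      exists 1, (r (r (e bx) (e by_)) (r u v)).
      split; [apply code_in_S; [apply hx | apply hy] | auto].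
  - intros x y [bx [u hx]] [by_ [v hy]].
    destruct (classic (bx = 1 \/ by_ = 1)) as [hb|hb].
    + eexists. right. exists bx, by_, u, v. eauto.
    + destruct hx as [hu [[_ ->]|[e1 _]]]; [|tauto].
      destruct hy as [hv [[_ ->]|[e2 _]]]; [|tauto].
      destruct (pairing_total _ _ hSR u v hu hv) as [c hc]. exists c. left. exact hc.
  - intros [x y] c c' [h1|h1] [h2|h2].
    + exact (pairing_functional _ _ hSR _ _ _ h1 h2).
    + contradiction (R_new_code_disjoint x y c c' h1 h2).
    + contradiction (R_new_code_disjoint x y c' c h2 h1).
    + destruct h1 as [bx [by_ [u [v [hx [hy [_ ->]]]]]]].
      destruct h2 as [bx' [by' [u' [v' [hx' [hy' [_ ->]]]]]]].
      destruct (split_point_unique _ _ _ _ _ hx hx') as [-> ->].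
      destruct (split_point_unique _ _ _ _ _ hy hy') as [-> ->]. reflexivity.
  - intros [x y] [x' y'] c [h1|h1] [h2|h2].
    + exact (pairing_injective _ _ hSR _ _ _ h1 h2).
    + destruct (pairing_support _ _ hSR x y c h1) as [_ [_ hc]].
      contradiction (new_code_not_in_S _ _ h2 hc).
    + destruct (pairing_support _ _ hSR x' y' c h2) as [_ [_ hc]].
      contradiction (new_code_not_in_S _ _ h1 hc).
    + destruct h1 as [bx [by_ [u [v [hx [hy [_ ->]]]]]]].
      destruct h2 as [bx' [by' [u' [v' [hx' [hy' [_ hc]]]]]]].
      simpl in hx, hy, hx', hy'.
      assert (hu := proj1 hx). assert (hv := proj1 hy).
      assert (hu' := proj1 hx'). assert (hv' := proj1 hy').
      apply h_inj in hc; [|apply code_in_S; auto ..].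
      apply r_injective in hc; [|apply r_closed; auto ..].
      destruct hc as [hb huv].
      apply r_injective in hb; auto. apply r_injective in huv; auto.
      destruct hb as [hb1 hb2]. apply e_inj in hb1, hb2. destruct huv. subst.
      rewrite (split_point_determines _ _ _ _ hx hx'), (split_point_determines _ _ _ _ hy hy').
      reflexivity.
  - intro n. apply in_S, base.
Qed.

End Extension.
End PairingFunction.

(* Hessenberg's theorem: a set containing a copy of nat absorbs its square.  A maximal
   pairing (S, R) must satisfy |A \ S| <= |S|, since otherwise it extends. *)
Theorem hessenberg : card_leq (A * A) A.
Proof.
  destruct maximal_pairing as [[[S R] hSR] hmax]. simpl in hSR.
  assert (hr : forall p : A * A, exists c, S (fst p) -> S (snd p) -> R p c).
  { intros [x y]. destruct (classic (S x /\ S y)) as [[hx hy]|hxy].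
    - destruct (pairing_total _ _ hSR x y hx hy) as [c hc]. exists c; auto.
    - exists x. intros hx hy. tauto. }
  destruct (choice _ hr) as [r0 hr0].
  set (r := fun x y => r0 (x, y)).
  assert (r_graph : forall x y, S x -> S y -> R (x, y) (r x y)).
  { intros x y. exact (hr0 (x, y)). }
  destruct (card_comparable {a | ~ S a} {a | S a}) as [hc|hc].
  - exact (pairing_absorbs S R r hSR r_graph hc).
  - exfalso. destruct (subtype_injection A _ _ hc) as [h [h_out h_inj]].
    assert (hext := extension_pairing S R r hSR r_graph h h_out h_inj).
    destruct (hmax (exist (fun p => pairing (fst p) (snd p)) (_, _) hext)) as [hsub _].
    + split; simpl.
      * intros a ha. exists 0, a. split; auto.
      * intros z c hz. left. exact hz.
    + assert (he0 := pairing_base _ _ hSR 0).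
      apply (h_out (e 0) he0), hsub. exists 1, (e 0). split; auto.
Qed.

End Hessenberg.

Section Topology.
Variables (X : Type) (T : topology X).

Lemma open_of_local (A : X -> Prop) :
  (forall x, A x -> exists U, open T U /\ U x /\ forall y, U y -> A y) -> open T A.
Proof.
  intro hA.
  assert (E : A = (fun x => exists U, (open T U /\ forall y, U y -> A y) /\ U x)).
  { apply functional_extensionality; intro x. apply propositional_extensionality; split.
    - intro hx. destruct (hA x hx) as [U [h1 [h2 h3]]]. exists U; auto.
    - intros [U [[_ h] hU]]. auto. }
  rewrite E. apply open_union. intros U [h _]; exact h.
Qed.

Lemma hausdorff_open_compl_point (q : X) : hausdorff T -> open T (fun x => x <> q).
Proof.
  intro hH. apply open_of_local. intros x hx.
  destruct (hH x q hx) as [U [V [hU [hV [hxU [hqV hUV]]]]]].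
  exists U. repeat split; auto. intros y hy ->. eauto.
Qed.

Lemma compl_subsingleton_open_dense (P : X -> Prop) :
  hausdorff T -> (forall x y, P x -> P y -> x = y) ->
  (forall p, ~ open T (fun x => x = p)) ->
  open T (fun x => ~ P x) /\ dense T (fun x => ~ P x).
Proof.
  intros hH hP hiso. split.
  - apply open_of_local. intros x hx.
    destruct (classic (exists q, P q)) as [[q hq]|hq].
    + exists (fun z => z <> q). split; [apply hausdorff_open_compl_point; auto|].
      split; [intros ->; auto|]. intros y hy hPy. apply hy, (hP y q hPy hq).
    + exists (fun _ => True). split; [apply open_full|]. split; auto.
      intros y _ hy. apply hq; eauto.
  - intros U hU [y hy]. apply NNPP; intro hno.
    assert (hall : forall x, U x -> P x).
    { intros x hx. apply NNPP; intro hx'. apply hno; eauto. }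
    apply (hiso y). apply open_of_local. intros x ->.
    exists U. split; [exact hU|]. split; [exact hy|]. intros z hz. apply (hP z y); auto.
Qed.

(* A non-empty countable open set B in a Hausdorff Baire space contains an isolated
   point: otherwise deleting the points of B one by one gives countably many dense open
   sets whose intersection misses B. *)
Lemma countable_open_isolated_point (B : X -> Prop) :
  hausdorff T -> baire T -> open T B -> (exists x, B x) -> countable {x | B x} ->
  exists p, open T (fun x => x = p).
Proof.
  intros hH hB hO [x0 hx0] [c hc]. apply NNPP; intro hn.
  assert (hiso : forall p, ~ open T (fun x => x = p)) by (intros p hp; apply hn; eauto).
  set (Pn := fun n x => exists b : {x | B x}, c b = n /\ proj1_sig b = x).
  assert (Pn_sub : forall n x y, Pn n x -> Pn n y -> x = y).
  { intros n x y [b [hb <-]] [b' [hb' <-]]. rewrite <- hb' in hb.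
    apply hc in hb. subst. reflexivity. }
  assert (hG := fun n => compl_subsingleton_open_dense (Pn n) hH (Pn_sub n) hiso).
  destruct (hB _ (fun n => proj1 (hG n)) (fun n => proj2 (hG n)) B hO (ex_intro _ x0 hx0))
    as [x [hx hall]].
  apply (hall (c (exist _ x hx))). exists (exist _ x hx). auto.
Qed.

(* Each point x of Dc gets an open neighbourhood W x, and the points of Dc whose
   neighbourhoods contain a given s are told apart by a code in nat: a point-countable
   open expansion of Dc. *)
Definition countable_expansion (Dc : X -> Prop) : Prop :=
  exists (W : X -> X -> Prop) (code : X -> X -> nat),
    (forall x, Dc x -> open T (W x) /\ W x x) /\
    (forall x x' s, Dc x -> Dc x' -> W x s -> W x' s -> code s x = code s x' -> x = x').

Lemma cwh_countable_expansion (Dc : X -> Prop) :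
  collectionwise_hausdorff T -> closed T Dc -> discrete_subspace T Dc -> countable_expansion Dc.
Proof.
  intros hC hc hd. destruct (hC Dc hc hd) as [W [hW hdisj]].
  exists W, (fun _ _ => 0). split; auto.
  intros x x' s hx hx' hs hs' _. apply NNPP; intro hne. eapply hdisj; eauto.
Qed.

(* In a meta-Lindelöf space, refine the cover by the complement of Dc and by open sets
   meeting Dc in one point to a point-countable open cover; for x in Dc, any member
   containing x meets Dc only in x. *)
Lemma meta_lindelof_countable_expansion (Dc : X -> Prop) :
  meta_lindelof T -> closed T Dc -> discrete_subspace T Dc -> countable_expansion Dc.
Proof.
  intros hM hc hd.
  set (F := fun U : X -> Prop => U = (fun z => ~ Dc z) \/
             (open T U /\ forall y y', Dc y -> U y -> Dc y' -> U y' -> y = y')).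
  assert (hF : open_cover T F).
  { split.
    - intros U [->|[h _]]; [exact hc | exact h].
    - intro x. destruct (classic (Dc x)) as [hx|hx].
      + destruct (hd x hx) as [U [h1 [h2 h3]]]. exists U. split; auto.
        right. split; auto. intros y y' a1 a2 a3 a4. rewrite (h3 y a1 a2), (h3 y' a3 a4); reflexivity.
      + exists (fun z => ~ Dc z). split; auto. left; reflexivity. }
  destruct (hM F hF) as [V [[hVo hVc] [hVr hVp]]].
  destruct (choice (fun x W => V W /\ W x) hVc) as [Wx hWx].
  assert (Wx_single : forall x, Dc x -> forall y, Dc y -> Wx x y -> y = x).
  { intros x hx y hy hxy. destruct (hWx x) as [h1 h2].
    destruct (hVr _ h1) as [U [[->|[_ hU]] hsub]].
    - exfalso. exact (hsub x h2 hx).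
    - apply (hU y x hy (hsub y hxy) hx (hsub x h2)). }
  set (cnt := fun s => proj1_sig (constructive_indefinite_description _ (hVp s))).
  assert (hcnt : forall s, injective (cnt s)).
  { intro s. exact (proj2_sig (constructive_indefinite_description _ (hVp s))). }
  exists Wx.
  exists (fun s x => match excluded_middle_informative (V (Wx x) /\ Wx x s) with
                     | left h => cnt s (exist _ (Wx x) h) | right _ => 0 end).
  split.
  - intros x hx. split; [apply hVo|]; apply (hWx x).
  - intros x x' s hx hx' hs hs'.
    destruct (excluded_middle_informative (V (Wx x) /\ Wx x s)) as [h1|h1];
      [| exfalso; apply h1; split; auto; apply (hWx x)].
    destruct (excluded_middle_informative (V (Wx x') /\ Wx x' s)) as [h2|h2];
      [| exfalso; apply h2; split; auto; apply (hWx x')].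
    intro e. apply hcnt in e. apply (f_equal (@proj1_sig _ _)) in e. simpl in e.
    symmetry. apply (Wx_single x hx x' hx'). rewrite e. apply (hWx x').
Qed.

End Topology.

Section DevelopableCover.
Variables (X : Type) (T : topology X) (x0 : X).
Hypothesis hH : hausdorff T.
Hypothesis hB : baire T.
Variable G : nat -> (X -> Prop) -> Prop.
Hypothesis hG : development T G.
Hypothesis hexp : forall Dc, closed T Dc -> discrete_subspace T Dc -> countable_expansion X T Dc.
Variables (I : Type) (D : I -> X -> Prop).
Hypothesis hD : forall i, discrete_subspace T (D i).
Hypothesis hcov : forall x, exists i, D i x.

Lemma development_open n W : G n W -> open T W.
Proof. apply (proj1 (proj1 hG n)). Qed.

Lemma development_covers n x : exists W, G n W /\ W x.
Proof. apply (proj2 (proj1 hG n)). Qed.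

Definition isolated_part (i : I) (n : nat) (x : X) : Prop :=
  D i x /\ forall y, D i y -> star x (G n) y -> y = x.

(* Since D i is discrete and the stars form local bases, these sets cover X. *)
Lemma isolated_parts_cover x : exists i n, isolated_part i n x.
Proof.
  destruct (hcov x) as [i hi]. destruct (hD i x hi) as [U [hU [hxU hUD]]].
  destruct (proj2 hG x U hU hxU) as [n hn]. exists i, n. split; auto.
Qed.

Lemma isolated_part_cell_unique n W i a b :
  G n W -> W a -> W b -> isolated_part i n a -> isolated_part i n b -> a = b.
Proof.
  intros hW ha hb [_ h] [hDb _]. symmetry. apply h; auto. exists W; auto.
Qed.

Lemma isolated_part_closed i n : closed T (isolated_part i n).
Proof.
  apply open_of_local. intros x hx.
  destruct (development_covers n x) as [W [hW hxW]].
  destruct (classic (exists d, isolated_part i n d /\ W d)) as [[d [hd hdW]]|hno].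
  - assert (hne : x <> d) by (intros ->; auto).
    destruct (hH x d hne) as [U [V [hU [hV [hxU [hdV hUV]]]]]].
    exists (fun z => W z /\ U z). split; [apply open_inter; auto; apply (development_open n); auto|].
    split; auto. intros y [hyW hyU] hy.
    assert (y = d) by (eapply isolated_part_cell_unique; eauto). subst. eauto.
  - exists W. split; [apply (development_open n); auto|]. split; auto.
    intros y hy hy'. apply hno; eauto.
Qed.

Lemma isolated_part_discrete i n : discrete_subspace T (isolated_part i n).
Proof.
  intros x hx. destruct (development_covers n x) as [W [hW hxW]].
  exists W. split; [apply (development_open n); auto|]. split; auto.
  intros y hy hyW. eapply isolated_part_cell_unique; eauto.
Qed.

Definition level (n : nat) (y : X) : Prop := exists i, isolated_part i n y.

(* Baire category: the levels cover X, so some level is dense in a non-empty open set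
   B, which may be taken inside a single member W of the corresponding cover. *)
Lemma level_dense_in_cell : exists B n W, open T B /\ (exists x, B x) /\ G n W /\
  (forall x, B x -> W x) /\
  (forall U z, open T U -> U z -> B z -> exists s, U s /\ B s /\ level n s).
Proof.
  set (O := fun n x => exists U, open T U /\ U x /\ forall y, U y -> ~ level n y).
  assert (hO : forall n, open T (O n)).
  { intro n. apply open_of_local. intros x [U [h1 [h2 h3]]]. exists U. repeat split; auto.
    intros y hy. exists U; auto. }
  destruct (classic (forall n, dense T (O n))) as [hd|hd].
  - exfalso.
    destruct (hB O hO hd (fun _ => True) (open_full _ T) (ex_intro _ x0 Logic.I)) as [x [_ hx]].
    destruct (isolated_parts_cover x) as [i [n hn]].
    destruct (hx n) as [U [_ [hU h]]]. apply (h x hU). exists i; auto.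
  - apply not_all_ex_not in hd. destruct hd as [n hn].
    apply not_all_ex_not in hn. destruct hn as [V hn].
    apply imply_to_and in hn. destruct hn as [hV hn].
    apply imply_to_and in hn. destruct hn as [[y hy] hn].
    destruct (development_covers n y) as [W [hW hyW]].
    assert (hWo := development_open n W hW).
    exists (fun x => V x /\ W x), n, W.
    split; [apply open_inter; auto|]. split; [exists y; auto|]. split; auto.
    split; [intros x [_ h]; exact h|].
    intros U z hU hz hBz. apply NNPP; intro hno. apply hn. exists z. split; [apply hBz|].
    exists (fun x => U x /\ (V x /\ W x)). split; [repeat apply open_inter; auto|].
    split; auto. intros s [h1 h2] h3. apply hno. exists s; auto.
Qed.

(* A point x of B,
   in isolated_part i m, is sent to (i, m, j, k) where s in W x is a point of the dense level
   in B, j is the index of the part of s (which determines s, as B lies in one cell) and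
   k is the code of x at s (which determines x among the points of isolated_part i m). *)
Lemma open_set_injects : exists B, open T B /\ (exists x, B x) /\
  card_leq {x | B x} (((I * nat) * I) * nat).
Proof.
  destruct level_dense_in_cell as [B [n [W [hBo [hBne [hW [hBW hdense]]]]]]].
  exists B. split; auto. split; auto.
  destruct (hcov x0) as [i0 _].
  assert (hidx : forall s, exists i, level n s -> isolated_part i n s).
  { intro s. destruct (classic (level n s)) as [[i h]|h]; [exists i | exists i0]; tauto. }
  destruct (choice _ hidx) as [idx hidx_spec].
  assert (idx_inj : forall s s', B s -> B s' -> level n s -> level n s' -> idx s = idx s' -> s = s').
  { intros s s' h1 h2 h3 h4 e. apply (isolated_part_cell_unique n W (idx s) s s'); auto.
    rewrite e; auto. }
  assert (hpart : forall x, exists p : I * nat, isolated_part (fst p) (snd p) x).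
  { intro x. destruct (isolated_parts_cover x) as [i [m h]]. exists (i, m); auto. }
  destruct (choice _ hpart) as [part hpart_spec].
  assert (hexp' : forall p : I * nat, exists Wc : (X -> X -> Prop) * (X -> X -> nat),
     (forall x, isolated_part (fst p) (snd p) x -> open T (fst Wc x) /\ fst Wc x x) /\
     (forall x x' s, isolated_part (fst p) (snd p) x -> isolated_part (fst p) (snd p) x' ->
        fst Wc x s -> fst Wc x' s -> snd Wc s x = snd Wc s x' -> x = x')).
  { intros [i m]. destruct (hexp _ (isolated_part_closed i m) (isolated_part_discrete i m))
      as [Wf [code h]].
    exists (Wf, code). exact h. }
  destruct (choice _ hexp') as [exp hexp_spec].
  assert (hsel : forall x, exists s, B x -> fst (exp (part x)) x s /\ B s /\ level n s).
  { intro x. destruct (classic (B x)) as [hx|hx]; [|exists x; tauto].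
    destruct (proj1 (hexp_spec (part x)) x (hpart_spec x)) as [h1 h2].
    destruct (hdense _ x h1 h2 hx) as [s hs]. exists s; auto. }
  destruct (choice _ hsel) as [sel hsel_spec].
  exists (fun b => let x := proj1_sig b in
            (part x, idx (sel x), snd (exp (part x)) (sel x) x)).
  intros [x hx] [x' hx'] e. simpl in e. injection e as e1 e2 e3.
  destruct (hsel_spec x hx) as [a1 [a2 a3]]. destruct (hsel_spec x' hx') as [b1 [b2 b3]].
  assert (es : sel x = sel x') by (apply idx_inj; auto).
  assert (exx : x = x').
  { apply (proj2 (hexp_spec (part x)) x x' (sel x) (hpart_spec x)).
    - rewrite e1. apply hpart_spec.
    - exact a1.
    - rewrite e1, es. exact b1.
    - rewrite <- es in e3. rewrite e3, e1. reflexivity. }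
  subst x'. f_equal. apply proof_irrelevance.
Qed.

End DevelopableCover.

Lemma card_leq_refl (A : Type) : card_leq A A.
Proof. exists (fun a => a). intros a b e. exact e. Qed.

Lemma card_leq_index_type (I C : Type) :
  card_leq I C -> card_leq nat C -> card_leq (C * C) C -> card_leq (((I * nat) * I) * nat) C.
Proof.
  intros hI hN hC.
  apply card_leq_prod; auto. apply card_leq_prod; auto. apply card_leq_prod; auto.
Qed.

Theorem mainTheorem2 (X : Type) (T : topology X) (x0 : X) :
  hausdorff T -> baire T -> developable T ->
  (collectionwise_hausdorff T \/ meta_lindelof T) ->
  dis_ge_Delta T.
Proof.
  intros hH hB [G hG] hsep I D hD hcov.
  assert (hexp : forall Dc, closed T Dc -> discrete_subspace T Dc -> countable_expansion X T Dc).
  { intros Dc hc hd. destruct hsep as [h|h].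
    - apply cwh_countable_expansion; auto.
    - apply meta_lindelof_countable_expansion; auto. }
  destruct (open_set_injects X T x0 hH hB G hG hexp I D hD hcov) as [B [hBo [hBne hBJ]]].
  destruct (card_comparable I nat) as [hI|[e he]].
  - (* I countable: B is countable, hence contains an isolated point p, and {p} works *)
    assert (hJ := card_leq_index_type I nat hI (card_leq_refl nat) nat_pairing).
    destruct (countable_open_isolated_point X T B hH hB hBo hBne (card_leq_trans _ _ _ hBJ hJ))
      as [p hp].
    exists (fun x => x = p). split; [exact hp|]. split; [exists p; reflexivity|].
    destruct (hcov p) as [i _]. exists (fun _ => i).
    intros [a ha] [b hb] _. subst a b. reflexivity.
  - (* I infinite: Hessenberg gives |I x nat x I x nat| = |I| *)
    assert (hJ := card_leq_index_type I I (card_leq_refl I) (ex_intro _ e he) (hessenberg I e he)).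
    exists B. split; [exact hBo|]. split; [exact hBne|]. exact (card_leq_trans _ _ _ hBJ hJ).
Qed.
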